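(* Let $G$ be an input tree and $H$ a TLRG with $G\Rightarrow^*_{\{r_0,r_1,r_2\}}H$. Then either $|V_H|=1$ or $H$ is not in normal form (i.e. some rule among $r_0,r_1,r_2$ is applicable to $H$).
   Context: Graphs over a label alphabet $(\mathcal L_V,\mathcal L_E)$ are tuples $G=(V,E,s,t,l,m,p)$ with $V,E$ finite, $s,t:E\to V$ total, $l:V\rightharpoonup\mathcal L_V$ partial, $m:E\to\mathcal L_E$ total, $p:V\rightharpoonup\{0,1\}$ partial (rootedness; root nodes are $p^{-1}(\{1\})$). TLRG = $l,p$ total. Morphisms preserve sources, targets, edge labels, and node labels and rootedness wherever defined. A rule $\langle L\leftarrow K\rightarrow R\rangle$ has TLRGs $L,R$ and a common subgraph $K$ (sets included, $s,t,m$ restricted, $l_K\subseteq l_L$, $p_K\subseteq p_L$, likewise for $R$). It is applied to TLRG $G$ via an injective morphism $g:L\to G$ satisfying the dangling condition (no edge outside $g(L)$ incident to a node of $g(V_L\setminus V_K)$) by deleting images of items of $L$ not in $K$ and undefining label/rootedness of $g_V(v)$ where undefined for $v\in V_K$, then adding disjointly the items of $R$ not in $K$ and setting label/rootedness of $g_V(v)$ to $l_R(v)/p_R(v)$ where undefined in $K$; $G\Rightarrow H$ when $H$ is isomorphic to the result; $\Rightarrow^*$ its reflexive-transitive closure. $\mathcal L=(\{\square,\triangle\},\{\square\})$; all edges labelled $\square$. Rule $r_0$: $L$ has an unrooted node $1$ labelled $\square$, a rooted node $2$ labelled $\square$, edge $1\to2$; $K$ is node $1$ with undefined label and rootedness;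 $R$ is node $1$ rooted labelled $\square$. Rule $r_1$: as $r_0$ but node $1$ of $L$ labelled $\triangle$. Rule $r_2$: $L$ has rooted node $1$ labelled $\square$, unrooted node $2$ labelled $\square$, edge $1\to2$; $K$ is nodes $1,2$ with undefined labels and rootedness, no edges; $R$ has node $1$ unrooted labelled $\triangle$, node $2$ rooted labelled $\square$, edge $1\to2$. An input graph is a TLRG over $\mathcal L$ with exactly one root node in which every node and edge is labelled $\square$. A tree is a non-empty graph whose underlying undirected multigraph is connected and has no undirected cycles (including loops and parallel edges), and in which every node has at most one incoming edge. An input tree is an input graph that is a tree. *)

(* Node and edge identifiers are natural numbers; a graph is given by
   finite (duplicate-free) lists of node ids and edge ids, together with
   total functions s, t, m (only meaningful on the edge list) and
   partial functions l, p (option-valued, only meaningful on nodes). *)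
From mathcomp Require Import all_boot.
Set Implicit Arguments. Unset Strict Implicit. Unset Printing Implicit Defensive.

Section Graphs.
Variables (LV LE : Type).

Record graph := Graph {
  gV : seq nat; gE : seq nat;
  gs : nat -> nat; gt : nat -> nat;
  gl : nat -> option LV;
  gm : nat -> LE;
  gp : nat -> option bool     (* partial rootedness: Some true = 1 = rooted *)
}.

Definition is_graph (G : graph) : Prop :=
  [/\ uniq (gV G), uniq (gE G) &
      forall e, e \in gE G -> gs G e \in gV G /\ gt G e \in gV G].

Definition is_tlrg (G : graph) : Prop :=
  is_graph G /\ forall v, v \in gV G -> gl G v <> None /\ gp G v <> None.

Definition is_morphism (L G : graph) (fv fe : nat -> nat) : Prop :=
  [/\ forall v, v \in gV L -> fv v \in gV G,
      forall e, e \in gE L ->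
        [/\ fe e \in gE G, gs G (fe e) = fv (gs L e),
            gt G (fe e) = fv (gt L e) & gm G (fe e) = gm L e],
      forall v a, v \in gV L -> gl L v = Some a -> gl G (fv v) = Some a &
      forall v b, v \in gV L -> gp L v = Some b -> gp G (fv v) = Some b].

Definition is_injective_morphism (L G : graph) (fv fe : nat -> nat) : Prop :=
  [/\ is_morphism L G fv fe, {in gV L &, injective fv} & {in gE L &, injective fe}].

Definition iso (G H : graph) : Prop :=
  exists (fv fe : nat -> nat),
  [/\ {in gV G &, injective fv} /\ {in gE G &, injective fe},
      (forall v, v \in gV G -> fv v \in gV H) /\
      (forall w, w \in gV H -> exists2 v, v \in gV G & fv v = w),
      (forall e, e \in gE G -> fe e \in gE H) /\
      (forall f, f \in gE H -> exists2 e, e \in gE G & fe e = f),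
      (forall e, e \in gE G ->
         [/\ gs H (fe e) = fv (gs G e), gt H (fe e) = fv (gt G e)
           & gm H (fe e) = gm G e]) &
      (forall v, v \in gV G -> gl H (fv v) = gl G v /\ gp H (fv v) = gp G v)].

Definition subgraph (K L : graph) : Prop :=
  [/\ is_graph K, {subset gV K <= gV L}, {subset gE K <= gE L},
      forall e, e \in gE K ->
        [/\ gs K e = gs L e, gt K e = gt L e & gm K e = gm L e] &
      (forall v a, v \in gV K -> gl K v = Some a -> gl L v = Some a) /\
      (forall v b, v \in gV K -> gp K v = Some b -> gp L v = Some b)].

Record rule := Rule { rL : graph; rK : graph; rR : graph }.

Definition is_rule (r : rule) : Prop :=
  [/\ is_tlrg (rL r), is_tlrg (rR r), subgraph (rK r) (rL r) & subgraph (rK r) (rR r)].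

Definition dangling (r : rule) (G : graph) (fv fe : nat -> nat) : Prop :=
  forall e, e \in gE G -> ~ (exists2 e', e' \in gE (rL r) & fe e' = e) ->
  forall v, v \in gV (rL r) -> v \notin gV (rK r) ->
    gs G e <> fv v /\ gt G e <> fv v.

Definition is_match (r : rule) (G : graph) (fv fe : nat -> nat) : Prop :=
  is_injective_morphism (rL r) G fv fe /\ dangling r G fv fe.

(* The result of applying r to G via (fv, fe): delete, relabel, then add
   the items of R not in K disjointly, using the fresh ids NV + v, NE + e. *)
Section Apply.
Variables (r : rule) (G : graph) (fv fe : nat -> nat).

Definition NV := (foldr maxn 0 (gV G)).+1.
Definition NE := (foldr maxn 0 (gE G)).+1.

Definition del_nodes := [seq fv v | v <- gV (rL r) & v \notin gV (rK r)].
Definition del_edges := [seq fe e | e <- gE (rL r) & e \notin gE (rK r)].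

Definition rnode (v : nat) : nat := if v \in gV (rK r) then fv v else NV + v.

Definition kpre (v : nat) : seq nat := [seq k <- gV (rK r) | fv k == v].

Definition res_l (v : nat) : option LV :=
  if v < NV then
    match kpre v with
    | k :: _ => match gl (rK r) k with Some _ => gl G v | None => gl (rR r) k end
    | [::] => gl G v
    end
  else gl (rR r) (v - NV).

Definition res_p (v : nat) : option bool :=
  if v < NV then
    match kpre v with
    | k :: _ => match gp (rK r) k with Some _ => gp G v | None => gp (rR r) k end
    | [::] => gp G v
    end
  else gp (rR r) (v - NV).

Definition apply_rule : graph :=
  Graph
    ([seq v <- gV G | v \notin del_nodes] ++
       [seq NV + v | v <- gV (rR r) & v \notin gV (rK r)])
    ([seq e <- gE G | e \notin del_edges] ++
       [seq NE + e | e <- gE (rR r) & e \notin gE (rK r)])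
    (fun e => if e < NE then gs G e else rnode (gs (rR r) (e - NE)))
    (fun e => if e < NE then gt G e else rnode (gt (rR r) (e - NE)))
    res_l
    (fun e => if e < NE then gm G e else gm (rR r) (e - NE))
    res_p.
End Apply.

Definition dderives (rules : rule -> Prop) (G H : graph) : Prop :=
  exists r fv fe, [/\ rules r, is_tlrg G, is_match r G fv fe, is_graph H
                    & iso (apply_rule r G fv fe) H].

Inductive derives (rules : rule -> Prop) : graph -> graph -> Prop :=
| derives_refl G : derives rules G G
| derives_step G H K : dderives rules G H -> derives rules H K -> derives rules G K.

Definition applicable (rules : rule -> Prop) (H : graph) : Prop :=
  exists r fv fe, rules r /\ is_match r H fv fe.

Definition connects (G : graph) (e u w : nat) : Prop :=
  (gs G e = u /\ gt G e = w) \/ (gs G e = w /\ gt G e = u).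

Inductive uconnected (G : graph) : nat -> nat -> Prop :=
| ucon_refl u : uconnected G u u
| ucon_step u w x e : e \in gE G -> connects G e u w -> uconnected G w x ->
                      uconnected G u x.

(* an undirected cycle v_0 e_0 v_1 ... v_{n-1} e_{n-1} v_0, n >= 1, with
   pairwise distinct edges and pairwise distinct nodes (n = 1: loop,
   n = 2: parallel edges) *)
Definition ucycle (G : graph) (vs es : seq nat) : Prop :=
  [/\ 0 < size es, size vs = size es, uniq es /\ uniq vs,
      {subset es <= gE G} /\ {subset vs <= gV G} &
      forall i, i < size es ->
        connects G (nth 0 es i) (nth 0 vs i) (nth 0 vs (i.+1 %% size es))].

Definition is_tree (G : graph) : Prop :=
  [/\ 0 < size (gV G),
      (forall u w, u \in gV G -> w \in gV G -> uconnected G u w),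
      (forall vs es, ~ ucycle G vs es) &
      forall v, v \in gV G -> count (fun e => gt G e == v) (gE G) <= 1].

End Graphs.

(* The concrete label alphabet ({□, △}, {□}) *)
Inductive vlab := Sq | Tri.
Inductive elab := ESq.

Definition Gr := graph vlab elab.

Definition input_graph (G : Gr) : Prop :=
  [/\ is_tlrg G, count (fun v => gp G v == Some true) (gV G) = 1,
      (forall v, v \in gV G -> gl G v = Some Sq) &
      (forall e, e \in gE G -> gm G e = ESq)].

Definition input_tree (G : Gr) : Prop := input_graph G /\ is_tree G.

Definition L01 (a : vlab) : Gr :=
  Graph [:: 1; 2] [:: 1] (fun _ => 1) (fun _ => 2)
        (fun v => if v == 1 then Some a else Some Sq) (fun _ => ESq)
        (fun v => if v == 1 then Some false else Some true).
Definition K01 : Gr :=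
  Graph [:: 1] [::] (fun _ => 1) (fun _ => 1) (fun _ => None) (fun _ => ESq)
        (fun _ => None).
Definition R01 : Gr :=
  Graph [:: 1] [::] (fun _ => 1) (fun _ => 1) (fun _ => Some Sq) (fun _ => ESq)
        (fun _ => Some true).
Definition r0 : rule vlab elab := Rule (L01 Sq) K01 R01.
Definition r1 : rule vlab elab := Rule (L01 Tri) K01 R01.

Definition L2 : Gr :=
  Graph [:: 1; 2] [:: 1] (fun _ => 1) (fun _ => 2)
        (fun _ => Some Sq) (fun _ => ESq)
        (fun v => if v == 1 then Some true else Some false).
Definition K2 : Gr :=
  Graph [:: 1; 2] [::] (fun _ => 1) (fun _ => 2) (fun _ => None) (fun _ => ESq)
        (fun _ => None).
Definition R2 : Gr :=
  Graph [:: 1; 2] [:: 1] (fun _ => 1) (fun _ => 2)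
        (fun v => if v == 1 then Some Tri else Some Sq) (fun _ => ESq)
        (fun v => if v == 1 then Some false else Some true).
Definition r2 : rule vlab elab := Rule L2 K2 R2.

Definition rules012 (r : rule vlab elab) : Prop := r = r0 \/ r = r1 \/ r = r2.

From Pilot Require Import Defs.
From mathcomp Require Import all_boot zify.
Set Implicit Arguments. Unset Strict Implicit. Unset Printing Implicit Defensive.

(* Every graph derived from an input tree satisfies an invariant: it is connected,
   has in-degree at most one and a height function [h] that increases by one along
   each edge; it has a unique root [rho], labelled □; and every △ node lies below the
   root (h v < h rho) and has an outgoing edge to a △ node or to the root.  Rule r2
   moves the root one edge down and leaves a △ behind; r0 and r1 delete the root,
   which the dangling condition forces to be a leaf, and make its parent the new
   root; both keep the invariant, and so does isomorphism.  For the input tree, [h]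
   is the depth, computed by iterating the parent map, which terminates because a
   closed chain of parents would be an undirected cycle.
   In a graph satisfying the invariant, an edge out of the root points to a □ node
   (its height exceeds that of every △ node), so r2 applies; otherwise an edge into
   the root makes the root a leaf and r0 or r1 applies; and a root without incident
   edges is, by connectivity, the only node. *)

Lemma uniq_count_le1 (T : eqType) (P : pred T) (s : seq T) :
  uniq s -> count P s <= 1 -> {in s &, forall a b, P a -> P b -> a = b}.
Proof.
move=> us cP a b aS bS Pa Pb; apply/eqP; apply: contraTT cP => ab.
have sub : {subset [:: a; b] <= filter P s}.
  by move=> x; rewrite !inE => /orP[]/eqP->; rewrite mem_filter ?Pa ?Pb.
by rewrite -ltnNge -size_filter (uniq_leq_size _ sub) //= inE ab.
Qed.

Lemma ltn_foldr_maxn (s : seq nat) x : x \in s -> x < (foldr maxn 0 s).+1.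
Proof. by elim: s => //= y s IH; rewrite inE => /orP[/eqP->|/IH]; lia. Qed.

Lemma factor_inj_in (R : Type) (s : seq nat) (f : nat -> nat) (g : nat -> R) :
  {in s &, injective f} -> exists g', {in s, forall x, g' (f x) = g x}.
Proof.
move=> finj; exists (fun y => g (nth 0 s (index y (map f s)))) => x xs; congr g.
have ix : index (f x) (map f s) < size s by rewrite -(size_map f) index_mem map_f.
apply: finj; rewrite ?mem_nth //.
by rewrite -(nth_map 0 (f 0)) // nth_index ?map_f.
Qed.

Section Connectivity.
Variables (LV LE : Type).
Implicit Types (G H : graph LV LE).

Lemma uconnected_map G H (f : nat -> nat) u w :
  (forall e, e \in gE G -> f (gs G e) = f (gt G e) \/
     exists2 e', e' \in gE H & gs H e' = f (gs G e) /\ gt H e' = f (gt G e)) ->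
  uconnected G u w -> uconnected H (f u) (f w).
Proof.
move=> fE; elim=> [x|x y z e eE C _ IH]; first exact: ucon_refl.
have fxy : f (gs G e) = f (gt G e) -> f x = f y.
  by case: C => [[<- <-]|[<- <-]].
case: (fE e eE) => [/fxy -> //|[e' e'E [se' te']]].
apply: (ucon_step (w := f y) e'E) => //.
by rewrite /connects se' te'; case: C => [[-> ->]|[-> ->]]; [left|right].
Qed.

Lemma uconnected_isolated G u w :
  uconnected G u w -> {in gE G, forall e, gs G e != u /\ gt G e != u} -> w = u.
Proof.
case=> // x y z e eE C _ /(_ e eE) [].
by case: C => [[-> _]|[_ ->]]; rewrite eqxx.
Qed.

End Connectivity.

Section Heights.
Variables (LV LE : Type) (G : graph LV LE).
Hypothesis endpoints : forall e, e \in gE G -> gs G e \in gV G /\ gt G e \in gV G.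
Hypothesis target_inj : {in gE G &, injective (gt G)}.
Hypothesis acyclic : forall vs es, ~ Defs.ucycle G vs es.

Definition has_parent v := has (fun e => gt G e == v) (gE G).
Definition parent_edge v := nth 0 (gE G) (find (fun e => gt G e == v) (gE G)).
Definition parent v := gs G (parent_edge v).

Definition has_ancestors n v := forall k, k < n -> has_parent (iter k parent v).

Definition ancestors n v := mkseq (fun k => iter k parent v) n.

Definition parent_cycle d v :=
  [/\ 0 < d, v \in gV G, iter d parent v = v & has_ancestors d v].

Fixpoint depth n v :=
  if n is n'.+1 then (if has_parent v then (depth n' (parent v)).+1 else 0) else 0.

Lemma size_ancestors n v : size (ancestors n v) = n.
Proof. exact: size_mkseq. Qed.

Lemma nth_ancestors n v k : k < n -> nth 0 (ancestors n v) k = iter k parent v.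
Proof. exact: nth_mkseq. Qed.

Lemma mem_ancestors n v x :
  x \in ancestors n v -> exists2 k, k < n & x = iter k parent v.
Proof. by move=> /mapP [k]; rewrite mem_iota => /andP [_ kn] ->; exists k. Qed.

Lemma parent_edgeP v :
  has_parent v -> parent_edge v \in gE G /\ gt G (parent_edge v) = v.
Proof.
move=> hv; split; first by rewrite /parent_edge mem_nth // -has_find.
exact/eqP/(nth_find 0 hv).
Qed.

Lemma parent_edge_target e : e \in gE G -> parent_edge (gt G e) = e.
Proof.
move=> eE; have hv : has_parent (gt G e) by apply/hasP; exists e.
by have [pE pt] := parent_edgeP hv; apply: target_inj.
Qed.

Lemma iter_parent_in n v :
  v \in gV G -> has_ancestors n v -> iter n parent v \in gV G.
Proof.
move=> vV; case: n => [|n] hn //=.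
by have [pE _] := parent_edgeP (hn n (ltnSn n)); case: (endpoints pE).
Qed.

Lemma ancestors_in n v :
  v \in gV G -> has_ancestors n v -> {subset ancestors n v <= gV G}.
Proof.
move=> vV hv x /mem_ancestors [k kn ->].
by apply: iter_parent_in => // i ik; apply: hv; lia.
Qed.

Lemma ancestors_repeat n v :
  v \in gV G -> has_ancestors n v -> ~~ uniq (ancestors n v) ->
  exists2 d, d < n & exists u, parent_cycle d u.
Proof.
move=> vV hv /(uniqPn 0) [i [j []]]; rewrite size_ancestors => ij jn.
rewrite !nth_ancestors ?(ltn_trans ij jn) // => E.
exists (j - i); first lia.
exists (iter i parent v); split; first lia.
- by apply: iter_parent_in => // k ki; apply: hv; lia.
- by rewrite -iterD subnK 1?E //; lia.
- by move=> k kd; rewrite -iterD; apply: hv; lia.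
Qed.

Lemma parent_cycle_ucycle d v :
  parent_cycle d v -> uniq (ancestors d v) ->
  Defs.ucycle G (ancestors d v) (map parent_edge (ancestors d v)).
Proof.
move=> [d0 vV cyc hv] uvs; split.
- by rewrite size_map size_ancestors.
- by rewrite size_map.
- split => //; rewrite map_inj_in_uniq // => a b.
  move=> /mem_ancestors [ka kad ->] /mem_ancestors [kb kbd ->] E.
  have [_ <-] := parent_edgeP (hv _ kad); have [_ <-] := parent_edgeP (hv _ kbd).
  by rewrite E.
- split; last exact: ancestors_in.
  by move=> e /mapP [x /mem_ancestors [k kd ->] ->]; case: (parent_edgeP (hv _ kd)).
- rewrite size_map size_ancestors => i id.
  rewrite (nth_map 0) ?size_ancestors // !nth_ancestors ?ltn_pmod //.
  right; split; last by case: (parent_edgeP (hv _ id)).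
  rewrite -/(parent _) -iterS.
  case: (ltnP i.+1 d) => h1; first by rewrite modn_small.
  have -> : i.+1 = d by lia.
  by rewrite modnn.
Qed.

Lemma no_parent_cycle d v : ~ parent_cycle d v.
Proof.
elim/ltn_ind: d v => d IH v cyc; have [_ vV _ hv] := cyc.
have [uvs|/(ancestors_repeat vV hv) [d' d'd [u]]] := boolP (uniq (ancestors d v)).
  exact: acyclic (parent_cycle_ucycle cyc uvs).
exact: IH.
Qed.

Lemma parent_chain_ends v :
  v \in gV G -> exists2 m, m <= size (gV G) & ~~ has_parent (iter m parent v).
Proof.
move=> vV; set N := size (gV G).
have [[k kN] /= ek|noend] := pickP (fun k : 'I_N.+1 => ~~ has_parent (iter k parent v)).
  by exists k.
have hv : has_ancestors N.+1 v by move=> k kN; apply/negbFE/(noend (Ordinal kN)).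
have : ~~ uniq (ancestors N.+1 v).
  by apply/negP => /uniq_leq_size /(_ (ancestors_in vV hv)); rewrite size_ancestors ltnn.
by case/(ancestors_repeat vV hv) => d _ [u /no_parent_cycle].
Qed.

Lemma depth_stable m n v :
  ~~ has_parent (iter m parent v) -> m <= n -> depth n v = depth m v.
Proof.
elim: m n v => [|m IH] [|n] v hv lmn //=; first by rewrite (negbTE hv).
by rewrite iterSr in hv; rewrite IH.
Qed.

Lemma exists_height :
  exists h : nat -> nat, {in gE G, forall e, h (gt G e) = (h (gs G e)).+1}.
Proof.
exists (depth (size (gV G)).+1) => e eE.
have hv : has_parent (gt G e) by apply/hasP; exists e.
rewrite [LHS]/= hv /parent parent_edge_target //.
have [sV _] := endpoints eE; have [m lm hm] := parent_chain_ends sV.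
by rewrite (depth_stable hm lm) (depth_stable hm (leqW lm)).
Qed.

End Heights.

Record tree_shape (G : Gr) : Prop := TreeShape {
  shape_endpoints : forall e, e \in gE G -> gs G e \in gV G /\ gt G e \in gV G;
  shape_connected : forall u w, u \in gV G -> w \in gV G -> uconnected G u w;
  shape_target_inj : {in gE G &, injective (gt G)}
}.

Record invariant (G : Gr) (rho : nat) (h : nat -> nat) : Prop := Invariant {
  inv_shape : tree_shape G;
  inv_root_in : rho \in gV G;
  inv_root_rooted : gp G rho = Some true;
  inv_root_label : gl G rho = Some Sq;
  inv_root_unique : forall v, v \in gV G -> gp G v = Some true -> v = rho;
  inv_height : {in gE G, forall e, h (gt G e) = (h (gs G e)).+1};
  inv_tri_height : forall v, v \in gV G -> gl G v = Some Tri -> h v < h rho;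
  inv_tri_succ : forall v, v \in gV G -> gl G v = Some Tri ->
    exists2 e, e \in gE G & gs G e = v /\ (gl G (gt G e) = Some Tri \/ gt G e = rho)
}.

Definition has_invariant (G : Gr) := exists rho h, invariant G rho h.

Lemma input_tree_invariant G : input_tree G -> has_invariant G.
Proof.
move=> [[[[uV uE endp] _] nroots lab _] [_ conn acyclic indeg]].
have tinj : {in gE G &, injective (gt G)}.
  move=> e1 e2 e1E e2E E; have [_ t1V] := endp e1 e1E.
  by apply: (uniq_count_le1 uE (indeg _ t1V)); rewrite //= E.
have /hasP [rho rhoV /eqP rho_root] : has (fun v => gp G v == Some true) (gV G).
  by rewrite has_count nroots.
have [h hh] := exists_height endp tinj acyclic.
exists rho, h; split => //.
- by rewrite lab.
- move=> v vV vroot.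
  by apply: (uniq_count_le1 (P := fun v => gp G v == Some true) uV _ vV rhoV);
    rewrite ?nroots ?vroot ?rho_root.
- by move=> v vV; rewrite lab.
- by move=> v vV; rewrite lab.
Qed.

Lemma invariant_iso A H rho h :
  invariant A rho h -> iso A H -> has_invariant H.
Proof.
move=> [[endp conn tinj] rhoV rroot rlab runiq hh thei tsucc].
move=> [fv [fe [[injV _] [mV sV] [mE sE] est lab]]].
have [h' h'fv] := factor_inj_in h injV.
have st e : e \in gE A -> gs H (fe e) = fv (gs A e) /\ gt H (fe e) = fv (gt A e).
  by case/est.
exists (fv rho), h'; split.
- split.
  + move=> f /sE [a aE <-]; have [-> ->] := st a aE; have [? ?] := endp a aE.
    by split; apply: mV.
  + move=> u w /sV [u' u'V <-] /sV [w' w'V <-].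
    apply: (uconnected_map _ (conn _ _ u'V w'V)) => e eE.
    by right; exists (fe e); [apply: mE | apply: st].
  + move=> f1 f2 /sE [a1 a1E <-] /sE [a2 a2E <-].
    rewrite (st a1 a1E).2 (st a2 a2E).2 => E.
    have [_ t1] := endp a1 a1E; have [_ t2] := endp a2 a2E.
    by rewrite (tinj a1 a2) // (injV _ _ t1 t2 E).
- exact: mV.
- by case: (lab rho rhoV) => _ ->.
- by case: (lab rho rhoV) => ->.
- by move=> w /sV [v vV <-]; case: (lab v vV) => _ -> /(runiq v vV) ->.
- move=> f /sE [a aE <-]; have [-> ->] := st a aE; have [sa ta] := endp a aE.
  by rewrite !h'fv //; apply: hh.
- by move=> w /sV [v vV <-]; case: (lab v vV) => -> _ /(thei v vV); rewrite !h'fv.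
- move=> w /sV [v vV <-]; case: (lab v vV) => -> _ /(tsucc v vV) [a aE [sa ta]].
  exists (fe a); first exact: mE.
  have [-> ->] := st a aE; rewrite sa; split => //.
  case: ta => [ta|->]; [left|by right].
  by have [_ tV] := endp a aE; case: (lab _ tV) => ->.
Qed.

Lemma tri_below_parent G rho h e v :
  invariant G rho h -> e \in gE G -> gt G e = rho ->
  v \in gV G -> gl G v = Some Tri -> v = gs G e \/ h v < h (gs G e).
Proof.
move=> [[endp _ tinj] _ _ _ _ hh thei tsucc] eE te.
have hrho : h rho = (h (gs G e)).+1 by rewrite -te hh.
have [n] := ubnP (h rho - h v); elim: n v => // n IH v /ltnSE hn vV vl.
have [e' e'E [sv [tl|tr]]] := tsucc v vV vl; last first.
  by left; rewrite -sv; congr gs; apply: tinj; rewrite ?tr.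
have [_ tV] := endp e' e'E; have := hh e' e'E; rewrite sv => ht.
have := thei _ tV tl; have := thei _ vV vl => hv htr.
by case: (IH (gt G e') _ tV tl) => [|<-|]; lia.
Qed.

Section ApplyR01.
Variables (G : Gr) (a : vlab) (fv fe : nat -> nat).

Local Notation A := (apply_rule (Rule (L01 a) K01 R01) G fv fe).

Lemma apply_r01_nodes x : (x \in gV A) = (x \in gV G) && (x != fv 2).
Proof. by rewrite /apply_rule /del_nodes /= cats0 mem_filter inE andbC. Qed.

Lemma apply_r01_edges x : (x \in gE A) = (x \in gE G) && (x != fe 1).
Proof. by rewrite /apply_rule /del_edges /= cats0 mem_filter inE andbC. Qed.

Lemma apply_r01_ends x : x \in gE G -> gs A x = gs G x /\ gt A x = gt G x.
Proof. by move=> /ltn_foldr_maxn xl; rewrite /apply_rule /= /NE xl. Qed.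

Lemma apply_r01_labels v : v \in gV G ->
  gl A v = (if v == fv 1 then Some Sq else gl G v) /\
  gp A v = (if v == fv 1 then Some true else gp G v).
Proof.
move=> /ltn_foldr_maxn vl.
by rewrite /apply_rule /= /res_l /res_p /NV vl /kpre /= eq_sym; case: ifP.
Qed.

Variables (rho : nat) (h : nat -> nat).
Hypothesis Ginv : invariant G rho h.
Hypothesis M : is_match (Rule (L01 a) K01 R01) G fv fe.

Lemma match_r01_edge :
  [/\ fv 2 = rho, fe 1 \in gE G, gs G (fe 1) = fv 1 & gt G (fe 1) = rho].
Proof.
have [[[mV mE _ mp] _ _] _] := M.
have root : fv 2 = rho by apply: (inv_root_unique Ginv); [apply: mV | apply: (mp 2 true)].
by have [eE se te _] := mE 1 (mem_head _ _); rewrite root in te.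
Qed.

Lemma match_r01_parent : fv 1 \in gV G /\ fv 1 != rho.
Proof.
have [[[mV _ _ mp] _ _] _] := M.
split; first by apply: mV.
by apply/eqP => E; have := inv_root_rooted Ginv; rewrite -E (mp 1 false).
Qed.

Lemma match_r01_leaf x :
  x \in gE G -> x != fe 1 -> gs G x <> rho /\ gt G x <> rho.
Proof.
have [_ dg] := M; have [root _ _ _] := match_r01_edge.
move=> xE xe; rewrite -root; apply: dg => //=.
by case=> y; rewrite inE => /eqP-> E; rewrite E eqxx in xe.
Qed.

Lemma apply_r01_shape : tree_shape A.
Proof.
have [[endp conn tinj] _ _ _ _ _ _ _] := Ginv.
have [root _ se te] := match_r01_edge; have [pV prho] := match_r01_parent.
split.
- move=> x; rewrite apply_r01_edges => /andP [xE xe].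
  have [-> ->] := apply_r01_ends xE; have [sV tV] := endp x xE.
  have [? ?] := match_r01_leaf xE xe.
  by rewrite !apply_r01_nodes sV tV root; split; apply/eqP.
- move=> u w; rewrite !apply_r01_nodes root => /andP [uV ur] /andP [wV wr].
  (* Walks through the deleted leaf [rho] are redirected to its parent. *)
  pose f v := if v == rho then fv 1 else v.
  have := uconnected_map (H := A) (f := f) _ (conn u w uV wV).
  rewrite /f (negbTE ur) (negbTE wr).
  apply=> x xE; have [xe|xe] := eqVneq x (fe 1).
    by left; rewrite xe se te eqxx (negbTE prho).
  have [sr tr] := match_r01_leaf xE xe; right; exists x.
    by rewrite apply_r01_edges xE xe.
  by have [-> ->] := apply_r01_ends xE; do 2!case: eqP => // _.
- move=> x y; rewrite !apply_r01_edges => /andP [xE _] /andP [yE _].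
  by rewrite (apply_r01_ends xE).2 (apply_r01_ends yE).2; apply: tinj.
Qed.

Lemma apply_r01_invariant : invariant A (fv 1) h.
Proof.
have [[endp _ tinj] _ _ _ runiq hh _ tsucc] := Ginv.
have [root eE se te] := match_r01_edge; have [pV prho] := match_r01_parent.
have AV v : (v \in gV A) = (v \in gV G) && (v != rho) by rewrite apply_r01_nodes root.
split.
- exact: apply_r01_shape.
- by rewrite AV pV prho.
- by rewrite (apply_r01_labels pV).2 eqxx.
- by rewrite (apply_r01_labels pV).1 eqxx.
- move=> v; rewrite AV => /andP [vV vr]; rewrite (apply_r01_labels vV).2.
  by case: eqP => // _ /(runiq v vV) vrho; rewrite vrho eqxx in vr.
- move=> x; rewrite apply_r01_edges => /andP [xE _].
  by have [-> ->] := apply_r01_ends xE; apply: hh.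
- move=> v; rewrite AV => /andP [vV _]; rewrite (apply_r01_labels vV).1.
  case: eqP => // vp vl; rewrite -se.
  by case: (tri_below_parent Ginv eE te vV vl) => // vs; rewrite vs se in vp.
- move=> v; rewrite AV => /andP [vV _]; rewrite (apply_r01_labels vV).1.
  case: eqP => // vp vl; have [x xE [sv xt]] := tsucc v vV vl.
  have xe : x != fe 1 by apply/eqP => xe; apply: vp; rewrite -sv xe se.
  have tl : gl G (gt G x) = Some Tri.
    by case: xt => // tr; case/eqP: xe; apply: tinj; rewrite ?tr.
  exists x; first by rewrite apply_r01_edges xE xe.
  have [-> ->] := apply_r01_ends xE; split => //.
  have [_ tV] := endp x xE; rewrite (apply_r01_labels tV).1.
  by case: eqP => [->|_]; [right|left].
Qed.

End ApplyR01.

Section ApplyR2.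
Variables (G : Gr) (fv fe : nat -> nat).

Local Notation A := (apply_rule r2 G fv fe).

Lemma apply_r2_nodes x : (x \in gV A) = (x \in gV G).
Proof. by rewrite /apply_rule /del_nodes /= cats0 mem_filter. Qed.

(* [NE G + 1] is the fresh copy of the edge of [R2]. *)
Lemma apply_r2_edges x :
  (x \in gE A) = ((x \in gE G) && (x != fe 1)) || (x == NE G + 1).
Proof. by rewrite /apply_rule /del_edges /= mem_cat mem_filter !inE andbC. Qed.

Lemma apply_r2_ends x : x \in gE G -> gs A x = gs G x /\ gt A x = gt G x.
Proof. by move=> /ltn_foldr_maxn xl; rewrite /apply_rule /= /NE xl. Qed.

Lemma apply_r2_new_edge : gs A (NE G + 1) = fv 1 /\ gt A (NE G + 1) = fv 2.
Proof. by rewrite /apply_rule /= ltnNge leq_addr. Qed.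

Lemma apply_r2_labels v : v \in gV G -> fv 1 != fv 2 ->
  gl A v = (if v == fv 1 then Some Tri else if v == fv 2 then Some Sq else gl G v) /\
  gp A v = (if v == fv 1 then Some false else if v == fv 2 then Some true else gp G v).
Proof.
move=> /ltn_foldr_maxn vl ne.
rewrite /apply_rule /= /res_l /res_p /NV vl /kpre /= !(eq_sym (fv _) v).
by case: ifP => _ //; case: ifP.
Qed.

Variables (rho : nat) (h : nat -> nat).
Hypothesis Ginv : invariant G rho h.
Hypothesis M : is_match r2 G fv fe.

Lemma match_r2_edge :
  [/\ fv 1 = rho, fe 1 \in gE G, gs G (fe 1) = rho & gt G (fe 1) = fv 2].
Proof.
have [[[mV mE _ mp] _ _] _] := M.
have root : fv 1 = rho by apply: (inv_root_unique Ginv); [apply: mV | apply: (mp 1 true)].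
by have [eE se te _] := mE 1 (mem_head _ _); rewrite root in se.
Qed.

Lemma match_r2_child : [/\ fv 2 \in gV G, gl G (fv 2) = Some Sq & fv 2 != rho].
Proof.
have [[[mV _ ml mp] _ _] _] := M; split; [exact: mV | exact: (ml 2) |].
by apply/eqP => E; have := inv_root_rooted Ginv; rewrite -E (mp 2 false).
Qed.

Lemma apply_r2_shape : tree_shape A.
Proof.
have [[endp conn tinj] rhoV _ _ _ _ _ _] := Ginv.
have [root eE se te] := match_r2_edge; have [cV _ _] := match_r2_child.
have [ns nt] := apply_r2_new_edge; rewrite root in ns.
split.
- move=> x; rewrite apply_r2_edges !apply_r2_nodes => /orP [/andP [xE _]|/eqP ->].
    by have [-> ->] := apply_r2_ends xE; apply: endp.
  by rewrite ns nt.
- move=> u w; rewrite !apply_r2_nodes => uV wV.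
  apply: (uconnected_map (f := id) _ (conn u w uV wV)) => x xE; right.
  have [xe|xe] := eqVneq x (fe 1).
    by exists (NE G + 1); rewrite ?apply_r2_edges ?eqxx ?orbT // ns nt xe se te.
  by exists x; rewrite ?apply_r2_edges ?xE ?xe //; apply: apply_r2_ends.
- have new_t x : x \in gE G -> x != fe 1 -> gt A x != gt A (NE G + 1).
    move=> xE xe; rewrite nt -te (apply_r2_ends xE).2.
    by apply: contra_neq xe; apply: tinj.
  move=> x y; rewrite !apply_r2_edges.
  move=> /orP [/andP [xE xe]|/eqP ->] /orP [/andP [yE ye]|/eqP ->] // E.
  + by apply: tinj; rewrite // -(apply_r2_ends xE).2 -(apply_r2_ends yE).2.
  + by case/eqP: (new_t x xE xe).
  + by case/eqP: (new_t y yE ye).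
Qed.

Lemma apply_r2_invariant : invariant A (fv 2) h.
Proof.
have [[endp _ _] _ _ _ runiq hh thei tsucc] := Ginv.
have [root eE se te] := match_r2_edge; have [cV cl crho] := match_r2_child.
have [ns nt] := apply_r2_new_edge; rewrite root in ns.
have hc : h (fv 2) = (h rho).+1 by rewrite -te -se hh.
have lab v : v \in gV G ->
    gl A v = (if v == rho then Some Tri else if v == fv 2 then Some Sq else gl G v) /\
    gp A v = (if v == rho then Some false else if v == fv 2 then Some true else gp G v).
  by move=> vV; rewrite -root; apply: apply_r2_labels; rewrite // root eq_sym.
split.
- exact: apply_r2_shape.
- by rewrite apply_r2_nodes.
- by rewrite (lab _ cV).2 (negbTE crho) eqxx.
- by rewrite (lab _ cV).1 (negbTE crho) eqxx.
- move=> v; rewrite apply_r2_nodes => vV; rewrite (lab v vV).2.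
  by case: eqP => // vr; case: eqP => // _ /(runiq v vV).
- move=> x; rewrite apply_r2_edges => /orP [/andP [xE _]|/eqP ->]; last by rewrite ns nt.
  by have [-> ->] := apply_r2_ends xE; apply: hh.
- move=> v; rewrite apply_r2_nodes => vV; rewrite (lab v vV).1 hc.
  case: eqP => [-> _|_]; first exact: ltnSn.
  by case: eqP => // _ /(thei v vV)/ltnW.
- move=> v; rewrite apply_r2_nodes => vV; rewrite (lab v vV).1.
  case: eqP => [-> _|vr].
    exists (NE G + 1); first by rewrite apply_r2_edges eqxx orbT.
    by rewrite ns nt; split => //; right.
  case: eqP => // _ vl; have [x xE [sv xt]] := tsucc v vV vl.
  have xe : x != fe 1 by apply/eqP => xe; apply: vr; rewrite -sv xe se.
  exists x; first by rewrite apply_r2_edges xE xe.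
  have [-> ->] := apply_r2_ends xE; split => //; left.
  have [_ tV] := endp x xE; rewrite (lab _ tV).1.
  case: eqP => // tr; case: eqP => [tc|_]; last by case: xt.
  by case: xt => [|/tr //]; rewrite tc cl.
Qed.

End ApplyR2.

Lemma dderives_invariant G H :
  has_invariant G -> dderives rules012 G H -> has_invariant H.
Proof.
move=> [rho [h Ginv]] [r [fv [fe [rr _ M _ iso]]]].
case: rr => [|[]] r_eq; subst r; apply: invariant_iso iso.
- exact: apply_r01_invariant Ginv M.
- exact: apply_r01_invariant Ginv M.
- exact: apply_r2_invariant Ginv M.
Qed.

Lemma derives_invariant G H :
  derives rules012 G H -> has_invariant G -> has_invariant H.
Proof. by elim=> // X Y Z /dderives_invariant XY _ IH /XY. Qed.

Lemma edge_morphism (H : Gr) l p x y e :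
  is_graph H -> e \in gE H -> gs H e = x -> gt H e = y -> x != y ->
  gl H x = l 1 -> gl H y = l 2 -> gp H x = p 1 -> gp H y = p 2 ->
  is_injective_morphism
    (Graph [:: 1; 2] [:: 1] (fun _ => 1) (fun _ => 2) l (fun _ => ESq) p) H
    (fun v => if v == 1 then x else y) (fun _ => e).
Proof.
move=> [_ _ endp] eE se te xy lx ly px py.
have [xV yV] := endp e eE; rewrite se te in xV yV.
split; first split.
- by move=> v; rewrite !inE => /orP[]/eqP->.
- by move=> e' _; split=> //; case: (gm H e).
- by move=> v b; rewrite !inE => /orP[]/eqP-> /= <-.
- by move=> v b; rewrite !inE => /orP[]/eqP-> /= <-.
- move=> u w; rewrite !inE => /orP[]/eqP-> /orP[]/eqP-> //= E.
  + by rewrite E eqxx in xy.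
  + by rewrite E eqxx in xy.
- by move=> u w; rewrite !inE => /eqP-> /eqP->.
Qed.

Lemma tlrg_labelled (H : Gr) v :
  is_tlrg H -> v \in gV H -> gl H v = Some Sq \/ gl H v = Some Tri.
Proof. by move=> [_ tot] /tot []; case: (gl H v) => [[]|]; auto. Qed.

Lemma tlrg_unrooted (H : Gr) rho h v :
  is_tlrg H -> invariant H rho h -> v \in gV H -> v != rho -> gp H v = Some false.
Proof.
move=> [_ tot] Hinv vV; have [_] := tot v vV.
by case E: (gp H v) => [[]|] // _; rewrite (inv_root_unique Hinv vV E) eqxx.
Qed.

Lemma root_out_edge_applicable (H : Gr) rho h e :
  is_tlrg H -> invariant H rho h -> e \in gE H -> gs H e = rho ->
  applicable rules012 H.
Proof.
move=> tH Hinv eE se; have [[endp _ _] _ rroot rlab _ hh thei _] := Hinv.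
have [_ cV] := endp e eE; have hc := hh e eE; rewrite se in hc.
have crho : rho != gt H e by apply/eqP => E; rewrite -E in hc; lia.
have cl : gl H (gt H e) = Some Sq.
  by case: (tlrg_labelled tH cV) => // /(thei _ cV); lia.
exists r2, (fun v => if v == 1 then rho else gt H e), (fun _ => e).
split; first by right; right.
split; last by move=> e' _ _ v; rewrite !inE => ->.
apply: edge_morphism => //; first exact: tH.1.
by apply: (tlrg_unrooted tH Hinv cV); rewrite eq_sym.
Qed.

Lemma match_r01_at (H : Gr) rho h e a :
  is_tlrg H -> invariant H rho h -> {in gE H, forall e', gs H e' != rho} ->
  e \in gE H -> gt H e = rho -> gl H (gs H e) = Some a ->
  is_match (Rule (L01 a) K01 R01) H
    (fun v => if v == 1 then gs H e else rho) (fun _ => e).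
Proof.
move=> tH Hinv nout eE te pl; have [[endp _ tinj] _ rroot rlab _ _ _ _] := Hinv.
have [pV _] := endp e eE; have prho := nout e eE.
split.
  apply: edge_morphism => //; first exact: tH.1.
  exact: tlrg_unrooted tH Hinv pV prho.
move=> e' e'E ne' v; rewrite !inE => /orP [] /eqP -> //= _.
split; first by apply/eqP; apply: nout.
by move=> E; apply: ne'; exists 1; rewrite ?inE //; apply: tinj; rewrite ?E.
Qed.

Lemma root_in_edge_applicable (H : Gr) rho h e :
  is_tlrg H -> invariant H rho h -> {in gE H, forall e', gs H e' != rho} ->
  e \in gE H -> gt H e = rho -> applicable rules012 H.
Proof.
move=> tH Hinv nout eE te; have [pV _] := shape_endpoints (inv_shape Hinv) eE.
case: (tlrg_labelled tH pV) => pl; [exists r0 | exists r1];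
  exists (fun v => if v == 1 then gs H e else rho), (fun _ => e).
- by split; [left | apply: match_r01_at tH Hinv nout eE te pl].
- by split; [right; left | apply: match_r01_at tH Hinv nout eE te pl].
Qed.

Lemma invariant_normal_form (H : Gr) rho h :
  is_tlrg H -> invariant H rho h -> size (gV H) = 1 \/ applicable rules012 H.
Proof.
move=> tH Hinv.
have [/hasP [e eE /eqP se]|/hasPn nout] := boolP (has (fun e => gs H e == rho) (gE H)).
  by right; apply: root_out_edge_applicable tH Hinv eE se.
have [/hasP [e eE /eqP te]|/hasPn nin] := boolP (has (fun e => gt H e == rho) (gE H)).
  by right; apply: root_in_edge_applicable tH Hinv nout eE te.
left; have [[[uV _ _] _] [[_ conn _] rhoV _ _ _ _ _ _]] := (tH, Hinv).
have sub : {subset gV H <= [:: rho]}.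
  move=> w wV; rewrite inE; apply/eqP.
  by apply: (uconnected_isolated (conn _ _ rhoV wV)) => e eE; rewrite nout ?nin.
by apply/eqP; rewrite eqn_leq (uniq_leq_size uV sub); case: (gV H) rhoV.
Qed.

Unset Implicit Arguments.

Theorem lemma4p9 (G H : Gr) :
  input_tree G -> is_tlrg H -> derives rules012 G H ->
  size (gV H) = 1 \/ applicable rules012 H.
Proof.
move=> /input_tree_invariant Ginv tH /derives_invariant /(_ Ginv) [rho [h Hinv]].
exact: invariant_normal_form tH Hinv.
Qed.
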